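(* Let $H$ be a $d$-degenerate $r$-uniform hypergraph on $n$ vertices, let $\{c_v\}$ be a random local $k$-partition of $H$, and run the greedy procedure described in the context on $H$ and $\{c_v\}$. For $i\in[n]$ and $j\in[k]$ let $X_{ij}$ be the indicator of the event $j\in L(v_i)$, and let $Y_{ij}=1-X_{ij}$. Then: (i) for all $i\in[n]$ and $j\in[k]$, $\mathbb{E}[X_{ij}]\ge (1-1/k^r)^d$; (ii) for each $i\in[n]$, the variables $(Y_{ij})_{j\in[k]}$ are negatively correlated, i.e. for every $J\subseteq[k]$, $\mathbb{P}\big[\bigcap_{j\in J}\{Y_{ij}=1\}\big]\le\prod_{j\in J}\mathbb{P}[Y_{ij}=1]$.
   Context: For a vertex $v$, $E(v)$ is the set of edges containing $v$. A local $k$-partition of $H$ is a collection $\{c_v\}$ of maps $c_v:E(v)\to\{1,\dots,k\}$. A random local $k$-partition is obtained by choosing, for each edge $e=\{v_1,\dots,v_r\}$, the tuple $(c_{v_1}(e),\dots,c_{v_r}(e))$ uniformly at random from $[k]^r$, independently over edges. $H$ is $d$-degenerate if its vertices can be ordered $v_1,\dots,v_n$ so that each back degree $d_i^-$ (the degree of $v_i$ in the subhypergraph induced by $\{v_1,\dots,v_i\}$) is at most $d$. Greedy procedure: fix such an ordering; set $\varphi(v_1)=1$ (and $L(v_1)=[k]$); for $i=2,\dots,n$ in turn, let $L(v_i)=[k]\setminus\{c_{v_i}(e): e\ni v_i,\ e\subseteq\{v_1,\dots,v_i\},\ \varphi(u)=c_u(e)\text{ for all }u\in e\setminus\{v_i\}\}$,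 and set $\varphi(v_i)$ to be the smallest element of $L(v_i)$ if $L(v_i)\neq\emptyset$, and $\varphi(v_i)=1$ otherwise. *)

From mathcomp Require Import all_boot all_order all_algebra.
Set Implicit Arguments. Unset Strict Implicit. Unset Printing Implicit Defensive.
Import Order.TTheory GRing.Theory Num.Theory.

(* Vertices are 'I_n, labelled by their position in the fixed degeneracy
   ordering: vertex i : 'I_n is v_{i+1}.  Colours [k] are represented by
   'I_k (colour j : 'I_k is j+1; colour "1" is 0). *)

Definition uniform (n r : nat) (E : {set {set 'I_n}}) : Prop :=
  forall e, e \in E -> #|e| = r.

Definition back_edges (n : nat) (E : {set {set 'I_n}}) (i : 'I_n) : {set {set 'I_n}} :=
  [set e in E | (i \in e) && (e \subset [set u : 'I_n | u <= i])].

Definition degenerate_order (n d : nat) (E : {set {set 'I_n}}) : Prop :=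
  forall i : 'I_n, #|back_edges E i| <= d.

(* Sample space of a random local k-partition: a value c_v(e) for each pair
   (e, v); only pairs with e \in E and v \in e are used, the remaining
   coordinates are independent dummy uniform coordinates. *)
Definition lkp (n k : nat) := {ffun ({set 'I_n} * 'I_n) -> 'I_k}.

(* Colour j is blocked at vertex i (given the values s of phi on v_1..v_i-1) *)
Definition blocked (n k : nat) (E : {set {set 'I_n}}) (w : lkp n k)
  (s : seq nat) (i : 'I_n) (j : nat) : bool :=
  [exists e in back_edges E i,
     (nat_of_ord (w (e, i)) == j) &&
     [forall u in e, (u != i) ==> (nth 0 s u == nat_of_ord (w (e, u)))]].

Definition inL (n k : nat) (E : {set {set 'I_n}}) (w : lkp n k)
  (s : seq nat) (i : 'I_n) (j : nat) : bool :=
  (j < k) && ((val i == 0) || ~~ blocked E w s i j).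

(* phi(v_i): smallest element of L(v_i), or colour "1" (= 0) if empty *)
Definition choose_col (n k : nat) (E : {set {set 'I_n}}) (w : lkp n k)
  (s : seq nat) (i : 'I_n) : nat :=
  let m := find (inL E w s i) (iota 0 k) in if m < k then m else 0.

Fixpoint greedy_phis (n k : nat) (E : {set {set 'I_n}}) (w : lkp n k) (m : nat)
  : seq nat :=
  match m with
  | 0 => [::]
  | m'.+1 =>
      let s := greedy_phis E w m' in
      match insub m' : option 'I_n with
      | Some i => rcons s (choose_col E w s i)
      | None => rcons s 0
      end
  end.

Definition greedyL (n k : nat) (E : {set {set 'I_n}}) (w : lkp n k) (i : 'I_n)
  : {set 'I_k} :=
  [set j : 'I_k | inL E w (greedy_phis E w i) i j].

Definition Pr (n k : nat) (A : {set lkp n k}) : rat :=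
  (#|A|%:R / #|[set: lkp n k]|%:R)%R.

Definition eventX (n k : nat) (E : {set {set 'I_n}}) (i : 'I_n) (j : 'I_k)
  : {set lkp n k} := [set w | j \in greedyL E w i].

Definition eventY (n k : nat) (E : {set {set 'I_n}}) (i : 'I_n) (j : 'I_k)
  : {set lkp n k} := [set w | j \notin greedyL E w i].

From mathcomp Require Import all_boot all_order all_algebra.
From mathcomp Require Import ring.
Set Implicit Arguments. Unset Strict Implicit. Unset Printing Implicit Defensive.
Import Order.TTheory GRing.Theory Num.Theory.
Local Open Scope ring_scope.

(* Fix a vertex v_i with i > 0.  The colours phi(v_1), ..., phi(v_(i-1)) only read
   the local colours on back edges of earlier vertices, and these edges are not back
   edges of v_i (an edge is a back edge of its last vertex only).  Conditionally on
   them, the back edges e of v_i therefore act independently: e forbids colour j at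
   v_i exactly when its r local colours take prescribed values, i.e. with probability
   p = 1/k^r for each j, and forbids nothing otherwise.  Let P_S(J) be the probability
   that every colour of J is forbidden by some edge of S.  Adding an edge e to S gives
   P_(S+e)(J) = P_S(J) + p * sum_(j in J) (P_S(J - j) - P_S(J)), and induction on S
   yields P_S({j}) = 1 - (1 - p)^|S| and P_S(J) <= P_S({j})^|J|; averaging over the
   conditioning gives (ii), and (i) because |S| <= d. *)

Lemma finset_ind (T : finType) (P : {set T} -> Prop) :
  P set0 -> (forall x (A : {set T}), x \notin A -> P A -> P (x |: A)) -> forall A, P A.
Proof.
move=> P0 PU A; move: {2}#|A| (erefl #|A|) => m; elim: m A => [|m IHm] A cardA.
  by move/eqP: cardA; rewrite cards_eq0 => /eqP ->.
have /set0Pn[x Ax] : A != set0 by rewrite -card_gt0 cardA.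
rewrite -(setD1K Ax); apply: PU; first by rewrite setD11.
by apply: IHm; move: cardA; rewrite (cardsD1 x) Ax add1n => -[].
Qed.

Lemma exprDn_ge_first_two_terms (R : numDomainType) (x y : R) t : 0 <= x -> 0 <= y ->
  x ^+ t.+1 + t.+1%:R * x ^+ t * y <= (x + y) ^+ t.+1.
Proof.
move=> x0 y0; elim: t => [|t IHt]; first by rewrite expr0 !expr1 mulr1 mul1r.
have xy0 : 0 <= x + y by rewrite addr_ge0.
apply: le_trans (ler_wpM2l xy0 IHt); rewrite -subr_ge0.
have -> : (x + y) * (x ^+ t.+1 + t.+1%:R * x ^+ t * y) - (x ^+ t.+2 + t.+2%:R * x ^+ t.+1 * y)
    = t.+1%:R * x ^+ t * y ^+ 2.
  by rewrite !exprS -[t.+2]addn1 -[t.+1]addn1 !natrD; ring.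
by rewrite !mulr_ge0 ?exprn_ge0 ?ler0n.
Qed.

Lemma ler_affine_step_expr (R : numDomainType) (p b q qs : R) t :
  0 <= p -> 0 <= b -> b <= 1 -> t.+1%:R * p <= 1 ->
  q <= b ^+ t.+1 -> qs <= t.+1%:R * b ^+ t ->
  q + p * (qs - q *+ t.+1) <= (b + p * (1 - b)) ^+ t.+1.
Proof.
move=> p0 b0 b1 tp1 qb qsb.
have y0 : 0 <= p * (1 - b) by rewrite mulr_ge0 // subr_ge0.
apply: le_trans (exprDn_ge_first_two_terms t b0 y0).
have -> : q + p * (qs - q *+ t.+1) = (1 - t.+1%:R * p) * q + p * qs.
  by rewrite -mulr_natr; ring.
apply: le_trans (_ : (1 - t.+1%:R * p) * b ^+ t.+1 + p * (t.+1%:R * b ^+ t) <= _).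
  by apply: lerD; apply: ler_wpM2l; rewrite ?subr_ge0.
by rewrite le_eqVlt; apply/orP; left; apply/eqP; rewrite exprS; ring.
Qed.

Lemma natr_forall_or_Some (R : ringType) (C : finType) (o : option C) (J : {set C})
    (P : pred C) :
  ([forall j in J, (o == Some j) || P j] : bool)%:R =
  ([forall j in J, P j] : bool)%:R +
  \sum_(j in J) (o == Some j)%:R *
    (([forall j' in J :\ j, P j'] : bool)%:R - ([forall j' in J, P j'] : bool)%:R) :> R.
Proof.
case: o => [j0|]; last by rewrite big1 ?addr0 // => j _; rewrite mul0r.
have -> : [forall j in J, (Some j0 == Some j) || P j] = [forall j in J :\ j0, P j].
  apply: eq_forallb => j; rewrite in_setD1 (inj_eq Some_inj) eq_sym.
  by case: (j \in J); case: eqP.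
have [J0 | J0] := boolP (j0 \in J).
  rewrite (bigD1 j0) //= eqxx mul1r big1 ?addr0 => [|j /andP[_ /negbTE]]; last first.
    by rewrite (inj_eq Some_inj) eq_sym => ->; rewrite mul0r.
  by rewrite addrC subrK.
rewrite big1 ?addr0 => [|j jJ]; last first.
  by rewrite (inj_eq Some_inj); case: eqP jJ J0 => [-> ->|_ _ _]; rewrite ?mul0r.
have -> // : J :\ j0 = J.
by apply/setP => j; rewrite in_setD1; case: eqP => // ->; rewrite (negbTE J0).
Qed.

Section UniformMean.
Variables (T K : finType).
Local Notation Omega := {ffun T -> K}.
Implicit Types (F G : Omega -> rat) (A : {set Omega}).

Definition mean F : rat := (\sum_w F w) / #|Omega|%:R.

Definition pr A : rat := mean (fun w => (w \in A)%:R).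

Definition splice (D : pred T) (w h : Omega) : Omega :=
  [ffun x => if D x then h x else w x].

Lemma eq_mean F G : F =1 G -> mean F = mean G.
Proof. by move=> eqFG; rewrite /mean (eq_bigr _ (fun w _ => eqFG w)). Qed.

Lemma meanD F G : mean (fun w => F w + G w) = mean F + mean G.
Proof. by rewrite /mean big_split mulrDl. Qed.

Lemma meanB F G : mean (fun w => F w - G w) = mean F - mean G.
Proof. by rewrite /mean big_split sumrN mulrBl. Qed.

Lemma meanMl c F : mean (fun w => c * F w) = c * mean F.
Proof. by rewrite /mean -mulr_sumr mulrA. Qed.

Lemma meanMr c F : mean (fun w => F w * c) = mean F * c.
Proof. by rewrite /mean -mulr_suml mulrAC. Qed.

Lemma mean_sum (C : finType) (P : pred C) (F : C -> Omega -> rat) :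
  mean (fun w => \sum_(j | P j) F j w) = \sum_(j | P j) mean (F j).
Proof. by rewrite /mean exchange_big mulr_suml. Qed.

Lemma ler_mean F G : (forall w, F w <= G w) -> mean F <= mean G.
Proof. by move=> leFG; rewrite ler_wpM2r ?invr_ge0 ?ler0n ?ler_sum. Qed.

Lemma pr_ge0 A : 0 <= pr A.
Proof. by rewrite divr_ge0 ?sumr_ge0 ?ler0n. Qed.

Lemma sum_splice (D : pred T) F :
  \sum_w \sum_h F (splice D w h) = #|Omega|%:R * \sum_w F w.
Proof.
pose swap (p : Omega * Omega) := (splice D p.1 p.2, splice D p.2 p.1).
have swapK : involutive swap.
  by move=> [w h]; congr pair; apply/ffunP => x; rewrite !ffunE; case: (D x).
rewrite pair_bigA /= (reindex_inj (inv_inj swapK)) /=.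
rewrite (eq_bigr (fun p => F p.1)) => [|[w h] _]; last first.
  by congr F; apply/ffunP => x; rewrite !ffunE; case: (D x).
rewrite -(pair_bigA _ (fun w _ => F w)) /= mulr_sumr.
by apply: eq_bigr => w _; rewrite sumr_const mulr_natl.
Qed.

Lemma mean_splice (D : pred T) F :
  mean F = mean (fun w => mean (fun h => F (splice D w h))).
Proof.
have [N0|N0] := eqVneq (#|Omega|%:R : rat) 0; first by rewrite /mean N0 !invr0 !mulr0.
by rewrite /mean -mulr_suml sum_splice [_ * (\sum_w _)]mulrC mulfK.
Qed.

Lemma pr_card A : pr A = #|A|%:R / #|Omega|%:R.
Proof.
rewrite /pr /mean -sum1_card natr_sum [in RHS]big_mkcond /=.
by congr (_ / _); apply: eq_bigr => w _; case: (w \in A).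
Qed.

Lemma card_prescribed (X : {set T}) (f : T -> K) :
  #|[set h : Omega | [forall x in X, h x == f x]]| = (#|K| ^ #|~: X|)%N.
Proof.
pose F x : pred K := if x \in X then pred1 (f x) else predT.
rewrite (eq_card (B := family F)) => [|h]; last first.
  rewrite inE; apply/forall_inP/familyP => [hX x | hF x xX]; rewrite /F.
    by case: ifP => [/hX|].
  by have := hF x; rewrite /F xX.
rewrite card_family foldrE big_image /= (bigID (mem X)) /=.
rewrite big1 => [|x xX]; last by rewrite /F xX card1.
rewrite mul1n (eq_bigr (fun _ => #|K|)) => [|x /negbTE xX]; last first.
  by rewrite /F xX cardT enumT.
by rewrite prod_nat_const; congr expn; apply: eq_card => x; rewrite inE.
Qed.

Lemma pr_le1 A : pr A <= 1.
Proof.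
rewrite pr_card; have [->|N0] := posnP #|Omega|; first by rewrite invr0 mulr0.
by rewrite ler_pdivrMr ?ltr0n // mul1r ler_nat max_card.
Qed.

Hypothesis K_gt0 : (0 < #|K|)%N.

Lemma mean_const c : mean (fun=> c) = c.
Proof.
have N0 : #|Omega|%:R != 0 :> rat by rewrite pnatr_eq0 -lt0n card_ffun expn_gt0 K_gt0.
by rewrite /mean sumr_const -[c *+ _]mulr_natr mulfK.
Qed.

Lemma pr_setC A : pr (~: A) = 1 - pr A.
Proof.
rewrite -(mean_const 1) -meanB; apply: eq_mean => w.
by rewrite inE; case: (w \in A); rewrite ?subr0 ?subrr.
Qed.

Lemma pr_prescribed (X : {set T}) (f : T -> K) :
  pr [set h : Omega | [forall x in X, h x == f x]] = 1 / #|K|%:R ^+ #|X|.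
Proof.
have K0 : #|K|%:R != 0 :> rat by rewrite pnatr_eq0 -lt0n.
rewrite pr_card card_prescribed card_ffun -(cardsC X) !natrX exprD.
by rewrite invfM mulrCA mulfV ?expf_neq0 // mulr1 div1r.
Qed.

End UniformMean.

Section IndependentOutcomes.
Variables (I U K C : finType).
Local Notation Omega := {ffun I * U -> K}.
Variable out : I -> Omega -> option C.
Hypothesis out_local :
  forall e (w w' : Omega), (forall u, w (e, u) = w' (e, u)) -> out e w = out e w'.

Implicit Types (e : I) (S : {set I}) (J : {set C}) (w h g : Omega).

Definition hit (S : {set I}) (J : {set C}) : {set Omega} :=
  [set g | [forall j in J, [exists e in S, out e g == Some j]]].

Lemma hit_spliceU1 e S J w h : e \notin S ->
  (splice [pred x | x.1 == e] w h \in hit (e |: S) J) =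
  [forall j in J, (out e h == Some j) || [exists e' in S, out e' w == Some j]].
Proof.
move=> eS; rewrite inE; apply: eq_forallb => j; congr (_ ==> _).
have out_splice e' :
    out e' (splice [pred x | x.1 == e] w h) = if e' == e then out e h else out e' w.
  by case: eqP => [->|/eqP ne]; apply: out_local => u; rewrite ffunE /= ?eqxx ?(negbTE ne).
apply/existsP/orP => [[e' /andP[]]|[hj|/existsP[e' /andP[e'S wj]]]].
- rewrite out_splice in_setU1.
  case: (eqVneq e' e) => [_ _ hj|_ /= e'S wj]; first by left.
  by right; apply/existsP; exists e'; rewrite e'S.
- by exists e; rewrite setU11 out_splice eqxx.
- have /negbTE e'e : e' != e by apply: contraNneq eS => <-.
  by exists e'; rewrite in_setU1 e'S orbT out_splice e'e.
Qed.

Hypothesis K_gt0 : (0 < #|K|)%N.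

Lemma pr_hit_setU1 e S J : e \notin S ->
  pr (hit (e |: S) J) = pr (hit S J) +
    \sum_(j in J) pr [set g | out e g == Some j] * (pr (hit S (J :\ j)) - pr (hit S J)).
Proof.
move=> eS; rewrite /pr (mean_splice [pred x | x.1 == e]).
under eq_mean => w do under eq_mean => h do
  rewrite hit_spliceU1 // natr_forall_or_Some.
under eq_mean => w do rewrite meanD mean_const // mean_sum.
rewrite meanD mean_sum; congr (_ + _); first by apply: eq_mean => w; rewrite inE.
apply: eq_bigr => j _; under eq_mean => w do rewrite meanMr.
by rewrite meanMl meanB; congr (_ * (_ - _)); apply: eq_mean => w; rewrite inE.
Qed.

Lemma pr_hit_set0 S : pr (hit S set0) = 1.
Proof.
rewrite -(mean_const (I * U)%type K_gt0 1); apply: eq_mean => g.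
suff -> : g \in hit S set0 by [].
by rewrite inE; apply/forall_inP => j; rewrite in_set0.
Qed.

Lemma pr_hit0 J j : j \in J -> pr (hit set0 J) = 0.
Proof.
move=> jJ; rewrite /pr /mean big1 ?mul0r // => g _.
rewrite inE; case: forall_inP => // /(_ j jJ) /exists_inP[e]; by rewrite in_set0.
Qed.

Lemma sum_pr_out_le1 e : \sum_j pr [set g | out e g == Some j] <= 1.
Proof.
rewrite -(mean_const (I * U)%type K_gt0 1) -mean_sum; apply: ler_mean => g.
under eq_bigr do rewrite inE.
case: (out e g) => [j0|]; last by rewrite big1.
rewrite (bigD1 j0) //= eqxx big1 ?addr0 // => j ne.
by rewrite (inj_eq Some_inj) eq_sym (negbTE ne).
Qed.

Section UniformOutcomes.
Variable p : rat.

Lemma pr_hit1 S : (forall e j, e \in S -> pr [set g | out e g == Some j] = p) ->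
  forall j, pr (hit S [set j]) = 1 - (1 - p) ^+ #|S|.
Proof.
move: S; apply: finset_ind => [_ j|e S eS IH out_p j].
  by rewrite (pr_hit0 (set11 j)) cards0 expr0 subrr.
have out_pS e' j' : e' \in S -> pr [set g | out e' g == Some j'] = p.
  by move=> e'S; apply: out_p; rewrite setU1r.
rewrite pr_hit_setU1 // big_set1 setDv pr_hit_set0 IH // out_p ?setU11 //.
by rewrite cardsU1 eS add1n exprS; ring.
Qed.

Lemma pr_hit_le S : (forall e j, e \in S -> pr [set g | out e g == Some j] = p) ->
  forall J, pr (hit S J) <= (1 - (1 - p) ^+ #|S|) ^+ #|J|.
Proof.
move: S; apply: finset_ind => [_ J|e S eS IH out_p J].
  have [->|/set0Pn[j jJ]] := eqVneq J set0; first by rewrite pr_hit_set0 !cards0 !expr0.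
  by rewrite (pr_hit0 jJ) exprn_ge0 // cards0 expr0 subrr.
have out_pS e' j' : e' \in S -> pr [set g | out e' g == Some j'] = p.
  by move=> e'S; apply: out_p; rewrite setU1r.
have pe j : pr [set g | out e g == Some j] = p by rewrite out_p ?setU11.
set b := 1 - (1 - p) ^+ #|S|.
rewrite cardsU1 eS add1n (_ : 1 - _ ^+ _.+1 = b + p * (1 - b)); last by rewrite /b exprS; ring.
have [->|/set0Pn[j0 j0J]] := eqVneq J set0; first by rewrite pr_hit_set0 !cards0 !expr0.
have p0 : 0 <= p by rewrite -(pe j0) pr_ge0.
have p1 : p <= 1 by rewrite -(pe j0) pr_le1.
have Jp1 : #|J|%:R * p <= 1.
  apply: le_trans (sum_pr_out_le1 e); rewrite (eq_bigr (fun=> p)) // sumr_const.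
  by rewrite -[p *+ _]mulr_natl; apply: ler_wpM2r => //; rewrite ler_nat max_card.
have b0 : 0 <= b by rewrite subr_ge0 exprn_ile1 // ?subr_ge0 // lerBlDr lerDl.
have b1 : b <= 1 by rewrite lerBlDr lerDl exprn_ge0 // subr_ge0.
have cardJ : #|J| = #|J|.-1.+1 by rewrite prednK // card_gt0; apply/set0Pn; exists j0.
set t := #|J|.-1 in cardJ.
have qJ := IH out_pS J.
have qJj : \sum_(j in J) pr (hit S (J :\ j)) <= #|J|%:R * b ^+ t.
  rewrite mulr_natl -sumr_const; apply: ler_sum => j jJ.
  have cardJj : #|J :\ j| = t by move: cardJ; rewrite (cardsD1 j) jJ => -[].
  by rewrite -cardJj IH.
rewrite pr_hit_setU1 //; under eq_bigr => j _ do rewrite pe.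
rewrite -mulr_sumr sumrB sumr_const cardJ in qJ qJj Jp1 *.
exact: ler_affine_step_expr.
Qed.

End UniformOutcomes.

End IndependentOutcomes.

Definition forbidden_colour n k (s : seq nat) (i : 'I_n) (e : {set 'I_n}) (g : lkp n k)
  : option 'I_k :=
  if [forall u in e, (u != i) ==> (nth 0 s u == g (e, u))] then Some (g (e, i)) else None.

Definition back_coords n (E : {set {set 'I_n}}) (i : 'I_n) : pred ({set 'I_n} * 'I_n) :=
  [pred x | x.1 \in back_edges E i].

Section Greedy.
Variables (n k : nat) (E : {set {set 'I_n}}).
Implicit Types (w g : lkp n k) (s : seq nat) (i u v : 'I_n) (e : {set 'I_n}).

Lemma forbidden_colour_local s i e w w' :
  (forall u, w (e, u) = w' (e, u)) -> forbidden_colour s i e w = forbidden_colour s i e w'.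
Proof.
move=> ww'; rewrite /forbidden_colour ww'.
by congr (if _ then _ else _); apply: eq_forallb => u; rewrite ww'.
Qed.

Lemma blockedE w s i (j : 'I_k) :
  blocked E w s i j = [exists e in back_edges E i, forbidden_colour s i e w == Some j].
Proof.
apply: eq_existsb => e; congr (_ && _); rewrite /forbidden_colour.
by case: ifP; rewrite ?andbT ?andbF // (inj_eq Some_inj).
Qed.

Lemma pr_forbidden_colour s i e (j : 'I_k) :
  i \in e -> (forall u, u \in e -> u != i -> nth 0 s u < k)%N ->
  pr [set g : lkp n k | forbidden_colour s i e g == Some j] = 1 / k%:R ^+ #|e|.
Proof.
move=> ie sk.
pose f (x : {set 'I_n} * 'I_n) := if x.2 == i then j else insubd j (nth 0 s x.2).
have -> : [set g : lkp n k | forbidden_colour s i e g == Some j] =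
          [set g : lkp n k | [forall x in [set (e, u) | u in e], g x == f x]].
  apply/setP => g; rewrite !inE /forbidden_colour; apply/idP/forall_inP.
    case: ifP => // /forall_inP ge /eqP[gj] x /imsetP[u ue ->].
    rewrite /f /=; case: (eqVneq u i) => [->|ui]; first by rewrite gj.
    by rewrite -val_eqE val_insubd sk // eq_sym; apply: (implyP (ge u ue)).
  move=> gf; have /eqP gi : g (e, i) == j by have := gf _ (imset_f _ ie); rewrite /f eqxx.
  rewrite (_ : [forall u in e, _]) ?gi //; apply/forall_inP => u ue; apply/implyP => ui.
  have := gf _ (imset_f _ ue); rewrite /f /= (negbTE ui) -val_eqE val_insubd sk //.
  by rewrite eq_sym.
have k0 : (0 < k)%N by rewrite -[k]card_ord; apply/card_gt0P; exists j.
by rewrite pr_prescribed ?card_ord // card_imset // => u v [].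
Qed.

Lemma blocked_local w w' s i j :
  (forall e u, e \in back_edges E i -> w (e, u) = w' (e, u)) ->
  blocked E w s i j = blocked E w' s i j.
Proof.
move=> ww'; apply: eq_existsb => e; case: (boolP (e \in _)) => //= eBi.
by rewrite ww' //; congr andb; apply: eq_forallb => u; rewrite ww'.
Qed.

Lemma back_edges_inj e u v : e \in back_edges E u -> e \in back_edges E v -> u = v.
Proof.
rewrite !inE => /and3P[_ ue /subsetP eu] /and3P[_ ve /subsetP ev].
by apply/val_inj/eqP; rewrite eqn_leq; move: (ev u ue) (eu v ve); rewrite !inE => -> ->.
Qed.

Lemma greedy_phis_local w w' m :
  (forall v e u, (v < m)%N -> e \in back_edges E v -> w (e, u) = w' (e, u)) ->
  greedy_phis E w m = greedy_phis E w' m.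
Proof.
elim: m => //= m IHm ww'; rewrite IHm => [|v e u vm]; last by apply: ww'; apply: ltnW.
case: insubP => // v _ vm; congr rcons; rewrite /choose_col /inL.
have -> // : find (inL E w (greedy_phis E w' m) v) (iota 0 k) =
             find (inL E w' (greedy_phis E w' m) v) (iota 0 k).
apply: eq_find => j; rewrite /inL (blocked_local _ _ (w' := w')) // => e u eBv.
by apply: ww' eBv; rewrite vm.
Qed.

Lemma size_greedy_phis w m : size (greedy_phis E w m) = m.
Proof. by elim: m => //= m IHm; case: insubP => *; rewrite size_rcons IHm. Qed.

Lemma greedy_phis_lt w m u :
  (0 < k)%N -> (u < m)%N -> (nth 0 (greedy_phis E w m) u < k)%N.
Proof.
move=> k0 um; rewrite -(size_greedy_phis w m) in um.
apply: (all_nthP 0 (a := fun x => x < k)%N _ _ um); elim: m {um} => //= m IHm.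
by case: insubP => *; rewrite all_rcons IHm andbT // /choose_col; case: ifP.
Qed.

Lemma greedy_phis_splice i w g :
  greedy_phis E (splice (back_coords E i) w g) i = greedy_phis E w i.
Proof.
apply: greedy_phis_local => v e u vi eBv; rewrite ffunE /=; case: ifP => // eBi.
by move: vi; rewrite (back_edges_inj eBv eBi) ltnn.
Qed.

Lemma bigcap_eventY_splice i (J : {set 'I_k}) w g : val i != 0%N ->
  (splice (back_coords E i) w g \in \bigcap_(j in J) eventY E i j) =
  (g \in hit (forbidden_colour (greedy_phis E w i) i) (back_edges E i) J).
Proof.
move=> i0; have Y j : (splice (back_coords E i) w g \in eventY E i j) =
    [exists e in back_edges E i, forbidden_colour (greedy_phis E w i) i e g == Some j].
  rewrite !inE greedy_phis_splice /inL ltn_ord (negbTE i0) /= negbK.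
  rewrite (blocked_local (w' := g)) ?blockedE // => e u eBi.
  by rewrite ffunE /back_coords /= eBi.
by rewrite /hit inE; apply/bigcapP/forall_inP => Yw j /Yw; rewrite Y.
Qed.

End Greedy.

Lemma PrE n k (A : {set lkp n k}) : Pr A = pr A.
Proof. by rewrite /Pr pr_card cardsT. Qed.

Section GreedyProbability.
Variables (n r k : nat) (E : {set {set 'I_n}}).
Hypotheses (E_uniform : uniform r E) (k_gt0 : (0 < k)%N).
Variable i : 'I_n.
Hypothesis i_neq0 : val i != 0%N.
Implicit Types (w : lkp n k).

Let card_ord_gt0 : (0 < #|'I_k|)%N. Proof. by rewrite card_ord. Qed.

Lemma Pr_bigcap_eventY (J : {set 'I_k}) :
  Pr (\bigcap_(j in J) eventY E i j) =
  mean (fun w : lkp n k =>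
    pr (hit (forbidden_colour (greedy_phis E w i) i) (back_edges E i) J)).
Proof.
rewrite PrE /pr (mean_splice (back_coords E i)).
by apply: eq_mean => w; apply: eq_mean => g; rewrite bigcap_eventY_splice.
Qed.

Lemma pr_forbidden_back_edge w e (j : 'I_k) : e \in back_edges E i ->
  pr [set g : lkp n k | forbidden_colour (greedy_phis E w i) i e g == Some j] = 1 / k%:R ^+ r.
Proof.
rewrite inE => /and3P[eE ie /subsetP ei].
rewrite pr_forbidden_colour ?E_uniform // => u ue ui.
apply: greedy_phis_lt => //; move: (ei u ue); rewrite inE.
by rewrite leq_eqVlt val_eqE (negbTE ui).
Qed.

Lemma Pr_eventY (j : 'I_k) :
  Pr (eventY E i j) = 1 - (1 - 1 / k%:R ^+ r) ^+ #|back_edges E i|.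
Proof.
have -> : eventY E i j = \bigcap_(j' in [set j]) eventY E i j' by rewrite big_set1.
rewrite Pr_bigcap_eventY (eq_mean (G := fun=> 1 - (1 - 1 / k%:R ^+ r) ^+ #|back_edges E i|)).
  exact: mean_const.
move=> w; apply: pr_hit1 => [e w1 w2|//|e j' /pr_forbidden_back_edge //].
exact: forbidden_colour_local.
Qed.

Lemma Pr_bigcap_eventY_le (J : {set 'I_k}) :
  Pr (\bigcap_(j in J) eventY E i j) <=
  (1 - (1 - 1 / k%:R ^+ r) ^+ #|back_edges E i|) ^+ #|J|.
Proof.
rewrite Pr_bigcap_eventY -[X in _ <= X](mean_const ({set 'I_n} * 'I_n)%type card_ord_gt0).
apply: ler_mean => w.
apply: pr_hit_le => [e w1 w2|//|e j' /pr_forbidden_back_edge //].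
exact: forbidden_colour_local.
Qed.

End GreedyProbability.

Lemma eventY_first n k (E : {set {set 'I_n}}) (i : 'I_n) (j : 'I_k) :
  val i = 0%N -> eventY E i j = set0.
Proof. by move=> i0; apply/setP => w; rewrite !inE /inL ltn_ord i0. Qed.

Lemma Pr_eventX_ge n r d k (E : {set {set 'I_n}}) :
  uniform r E -> degenerate_order d E ->
  forall (i : 'I_n) (j : 'I_k), (1 - 1 / k%:R ^+ r) ^+ d <= Pr (eventX E i j).
Proof.
move=> E_uniform E_degenerate i j.
have k_gt0 : (0 < k)%N by apply: leq_ltn_trans (ltn_ord j).
have p0 : 0 <= 1 / k%:R ^+ r :> rat by rewrite divr_ge0 ?exprn_ge0.
have p1 : 1 / k%:R ^+ r <= 1 :> rat.
  by rewrite ler_pdivrMr ?exprn_gt0 ?ltr0n // mul1r exprn_ege1 ?ler1n.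
have q0 : 0 <= 1 - 1 / k%:R ^+ r :> rat by rewrite subr_ge0.
have q1 : 1 - 1 / k%:R ^+ r <= 1 :> rat by rewrite lerBlDr lerDl.
have -> : eventX E i j = ~: eventY E i j by apply/setP => w; rewrite !inE negbK.
rewrite PrE pr_setC ?card_ord // -PrE.
have [i0|i0] := eqVneq (val i) 0%N.
  by rewrite eventY_first // PrE pr_card cards0 mul0r subr0 exprn_ile1.
by rewrite (Pr_eventY E_uniform) // subKr; apply: ler_wiXn2l => //; apply: E_degenerate.
Qed.

Lemma Pr_bigcap_eventY_le_prod n r k (E : {set {set 'I_n}}) :
  uniform r E -> forall (i : 'I_n) (J : {set 'I_k}),
  Pr (\bigcap_(j in J) eventY E i j) <= \prod_(j in J) Pr (eventY E i j).
Proof.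
move=> E_uniform i J.
have [->|/set0Pn[j0 j0J]] := eqVneq J set0; first by rewrite !big_set0 PrE pr_le1.
have k_gt0 : (0 < k)%N by apply: leq_ltn_trans (ltn_ord j0).
have [i0|i0] := eqVneq (val i) 0%N.
  have -> : \bigcap_(j in J) eventY E i j = set0.
    by apply/eqP; rewrite -subset0 -(eventY_first E j0 i0); apply: bigcap_inf.
  by rewrite PrE pr_card cards0 mul0r; apply: prodr_ge0 => j _; rewrite PrE pr_ge0.
apply: le_trans (Pr_bigcap_eventY_le E_uniform k_gt0 i0 J) _.
by rewrite (eq_bigr _ (fun j _ => Pr_eventY E_uniform k_gt0 i0 j)) prodr_const.
Qed.

Theorem lemma3p5 (n r d k : nat) (E : {set {set 'I_n}}) :
  uniform r E -> degenerate_order d E ->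
  (forall (i : 'I_n) (j : 'I_k),
      ((1 - 1 / (k%:R ^+ r)) ^+ d <= Pr (eventX E i j))%R) /\
  (forall (i : 'I_n) (J : {set 'I_k}),
      (Pr (\bigcap_(j in J) eventY E i j) <= \prod_(j in J) Pr (eventY E i j))%R).
Proof.
move=> E_uniform E_degenerate.
by split; [exact: Pr_eventX_ge E_uniform E_degenerate | exact: Pr_bigcap_eventY_le_prod E_uniform].
Qed.
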